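(* If $n$ is a power of $2$ (with exponent at least $1$), then $$\sum_{k=0}^{n-1}(-1)^k(2k+1)^3D_k\equiv 2n^2\pmod{n^3}.$$
   Context: $D_n=\sum_{k=0}^{n}\binom{n}{k}\binom{n+k}{k}$ are the central Delannoy numbers. *)

From mathcomp Require Import all_boot all_algebra.
Set Implicit Arguments. Unset Strict Implicit. Unset Printing Implicit Defensive.
Import GRing.Theory.

Definition delannoy (n : nat) : nat :=
  \sum_(0 <= k < n.+1) 'C(n, k) * 'C(n + k, k).

From mathcomp Require Import all_boot all_algebra.
From mathcomp Require Import ring zify.
Import GRing.Theory.
Local Open Scope ring_scope.

(* Write n = m + 1 and f j = C(m, j) C(n + j, j).  Expanding
   D_k = sum_j C(k + j, 2j) C(2j, j), the alternating sum over k of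
   (2k + 1)^3 C(k + j, 2j) telescopes, and the whole sum becomes
   (-1)^m n sum_j f j (4n^2 - 4j - 3).  As sum_j (-1)^j f j = (-1)^m n, for
   odd m the claim reduces to n^2 | sum_j f j (4j + 3) + 2 sum_j (-1)^j f j,
   i.e. to n^2 | sum_i (8i + 5) (f (2i) + f (2i + 1)).  Finally
   (j + 1)^2 (f j + f (j + 1)) = n^2 f j, so n^2 divides every pair whose
   index 2i + 1 is coprime to n, which is all of them when n is a power of 2. *)

Lemma mul_bin_double (k j : nat) :
  ('C(k, j) * 'C(k + j, j) = 'C(k + j, j.*2) * 'C(j.*2, j))%N.
Proof.
have [le_jk | lt_kj] := leqP j k; last first.
  by rewrite (bin_small lt_kj) mul0n bin_small // -addnn ltn_add2r.
apply/eqP; rewrite -(eqn_pmul2r (_ : 0 < j`! * j`! * (k - j)`!)%N); last first.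
  by rewrite !muln_gt0 !fact_gt0.
have le_2j_kj : (j.*2 <= k + j)%N by rewrite -addnn leq_add2r.
have le_j_2j : (j <= j.*2)%N by rewrite -addnn leq_addl.
have fact_k := bin_fact le_jk.
have fact_kj := bin_fact (leq_addl k j); rewrite addnK in fact_kj.
have fact_kj2 := bin_fact le_2j_kj.
rewrite (_ : k + j - j.*2 = k - j)%N in fact_kj2; last by rewrite -addnn subnDr.
have fact_2j := bin_fact le_j_2j.
rewrite (_ : j.*2 - j = j)%N in fact_2j; last by rewrite -addnn addnK.
apply/eqP; transitivity (k + j)`!%N.
  by rewrite -fact_kj -fact_k; ring.
by rewrite -fact_kj2 -fact_2j; ring.
Qed.

Lemma delannoy_sum_double (k M : nat) : (k < M)%N ->
  delannoy k = (\sum_(j < M) 'C(k + j, j.*2) * 'C(j.*2, j))%N.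
Proof.
move=> lt_kM; rewrite /delannoy big_mkord.
rewrite (big_ord_widen M (fun j => 'C(k, j) * 'C(k + j, j))%N lt_kM) big_mkcond.
apply: eq_bigr => j _; rewrite -mul_bin_double.
by case: ifP => // /negbT; rewrite -ltnNge ltnS => /bin_small->.
Qed.

Lemma mul_bin_double_succ (m j : nat) :
  ((m.+1)%:Z - j%:Z) * ('C(m.+1 + j, j.*2))%:Z
  = ((m.+1 + j)%N)%:Z * ('C(m + j, j.*2))%:Z.
Proof.
have [le_jm | lt_mj] := leqP j m.+1; last first.
  by rewrite !bin_small ?mulr0 // -addnn; lia.
have := mul_bin_down (m.+1 + j) j.*2.
rewrite addSn (_ : (m + j).+1 - j.*2 = m.+1 - j)%N; last by rewrite -addnn; lia.
by move/(congr1 Posz); rewrite !PoszM subzn // => ->.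
Qed.

Lemma alt_cube_bin_double_sum (m j : nat) :
  \sum_(k < m.+1) (-1) ^+ k * ((2 * k + 1)%N)%:Z ^+ 3 * ('C(k + j, j.*2))%:Z
  = (-1) ^+ m * ('C(m + j, j.*2))%:Z * ((m + j + 1)%N)%:Z
      * (4 * (m.+1)%:Z ^+ 2 - 4 * j%:Z - 3).
Proof.
elim: m => [|m IHm].
  rewrite big_ord1 /= add0n; case: j => [|j]; first by rewrite bin0.
  by rewrite bin_small ?mulr0 ?mul0r // -addnn; lia.
rewrite big_ord_recr /= {}IHm (addn1 (m + j)) -addSn.
have := mul_bin_double_succ m j.
move: ('C(m + j, j.*2))%:Z ('C(m.+1 + j, j.*2))%:Z => c c' Hc.
transitivity ((-1) ^+ m * ((m.+1 + j)%N%:Z * c) * (4 * (m.+1)%:Z ^+ 2 - 4 * j%:Z - 3)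
   + (-1) ^+ m.+1 * ((2 * m.+1 + 1)%N)%:Z ^+ 3 * c'); first by ring.
by rewrite -Hc ![(-1) ^+ m.+1]exprS; ring.
Qed.

Definition shifted_delannoy_term (m j : nat) : nat := 'C(m, j) * 'C(m.+1 + j, j).

Lemma central_bin_mul_bin_double (m j : nat) :
  ('C(j.*2, j) * 'C(m + j, j.*2) * (m + j + 1) = m.+1 * shifted_delannoy_term m j)%N.
Proof.
have H : ((m.+1 + j) * 'C(m + j, j) = m.+1 * 'C(m.+1 + j, j))%N.
  by have := mul_bin_down (m.+1 + j) j; rewrite addnK addSn => <-.
rewrite /shifted_delannoy_term addn1 -addSn (mulnC 'C(j.*2, j)) -mul_bin_double.
by rewrite [RHS]mulnCA -H; ring.
Qed.

Lemma alt_cube_delannoy_sumE (m : nat) :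
  \sum_(0 <= k < m.+1) (-1) ^+ k * ((2 * k + 1)%N)%:Z ^+ 3 * (delannoy k)%:Z
  = (-1) ^+ m * (m.+1)%:Z * \sum_(j < m.+1)
      (shifted_delannoy_term m j)%:Z * (4 * (m.+1)%:Z ^+ 2 - 4 * j%:Z - 3).
Proof.
rewrite big_mkord.
under eq_bigr => k _ do
  rewrite (@delannoy_sum_double k m.+1 (ltn_ord k))
          -[Posz (\sum_(j < _) _)]intz sumMz big_distrr.
rewrite exchange_big big_distrr /=; apply: eq_bigr => j _.
under eq_bigr => k _ do rewrite intz PoszM mulrA mulrC.
rewrite -big_distrr /= alt_cube_bin_double_sum.
transitivity ((-1) ^+ m * (4 * (m.+1)%:Z ^+ 2 - 4 * j%:Z - 3)
  * ('C(j.*2, j) * 'C(m + j, j.*2) * (m + j + 1))%N%:Z); first by rewrite !PoszM; ring.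
by rewrite central_bin_mul_bin_double PoszM; ring.
Qed.

Definition alt_bin_sum (m r : nat) : int :=
  \sum_(j < m.+1) (-1) ^+ j * ('C(m, j))%:Z * ('C(r + j, j))%:Z.

Definition alt_bin_sum_shift (m r : nat) : int :=
  \sum_(j < m.+1) (-1) ^+ j * ('C(m, j))%:Z * ('C(r.+1 + j, j.+1))%:Z.

Lemma alt_bin_sum_shift0 (m : nat) : alt_bin_sum_shift m 0 = alt_bin_sum m 0.
Proof. by apply: eq_bigr => j _; rewrite add0n add1n !binn. Qed.

Lemma alt_bin_sum_shiftS (m r : nat) :
  alt_bin_sum_shift m r.+1 = alt_bin_sum_shift m r + alt_bin_sum m r.+1.
Proof.
rewrite -big_split /=; apply: eq_bigr => j _.
by rewrite addSn binS PoszD; ring.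
Qed.

Lemma alt_bin_sumS (m r : nat) :
  alt_bin_sum m.+1 r = alt_bin_sum m r - alt_bin_sum_shift m r.
Proof.
rewrite /alt_bin_sum big_ord_recl /= !bin0 expr0 !mulr1.
under eq_bigr => j _ do rewrite /bump /= add1n binS PoszD !mulrDr mulrDl.
rewrite big_split /= addrA; congr (_ + _).
  rewrite [RHS](big_ord_recl m) /= !bin0 expr0 !mulr1; congr (_ + _).
  by rewrite big_ord_recr /= bin_small // mulr0 mul0r addr0.
rewrite -sumrN; apply: eq_bigr => j _.
by rewrite addnS addSn exprS; ring.
Qed.

Lemma alt_bin_sumE (m r : nat) : alt_bin_sum m r = (-1) ^+ m * ('C(r, m))%:Z.
Proof.
elim: m r => [|m IHm] r; first by rewrite /alt_bin_sum big_ord1 /= !bin0.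
have shiftE s : alt_bin_sum_shift m s = (-1) ^+ m * ('C(s.+1, m.+1))%:Z.
  elim: s => [|s IHs].
    by rewrite alt_bin_sum_shift0 IHm binS (bin_small (ltn0Sn m)).
  by rewrite alt_bin_sum_shiftS IHs IHm [in RHS]binS PoszD; ring.
by rewrite alt_bin_sumS IHm shiftE binS PoszD exprS; ring.
Qed.

Lemma alt_shifted_delannoy_sum (m : nat) :
  \sum_(j < m.+1) (-1) ^+ j * (shifted_delannoy_term m j)%:Z = (-1) ^+ m * (m.+1)%:Z.
Proof.
have := alt_bin_sumE m m.+1; rewrite binSn => <-.
by apply: eq_bigr => j _; rewrite PoszM mulrA.
Qed.

Lemma shifted_delannoy_term_pair (m j : nat) :
  (j.+1 ^ 2 * (shifted_delannoy_term m j + shifted_delannoy_term m j.+1)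
   = m.+1 ^ 2 * shifted_delannoy_term m j)%N.
Proof.
rewrite /shifted_delannoy_term.
have [le_jm | lt_mj] := leqP j m; last first.
  by rewrite !(bin_small lt_mj) (bin_small (leqW lt_mj)) !(mul0n, muln0).
have down := mul_bin_left m j.
have diag := mul_bin_diag (m.+1 + j.+1) j; rewrite addnS /= in diag.
rewrite !addnS mulnDr.
have -> : (j.+1 ^ 2 * ('C(m, j.+1) * 'C((m.+1 + j).+1, j.+1))
  = (j.+1 * 'C(m, j.+1)) * (j.+1 * 'C((m.+1 + j).+1, j.+1)))%N by ring.
rewrite down -diag.
by move: (m - j)%N (subnK le_jm) => d <-; ring.
Qed.

Lemma dvdn_shifted_delannoy_term_pair (m j : nat) : coprime j.+1 m.+1 ->
  (m.+1 ^ 2 %| shifted_delannoy_term m j + shifted_delannoy_term m j.+1)%N.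
Proof.
move=> co_jm; rewrite -(@Gauss_dvdr _ (j.+1 ^ 2)).
  by rewrite shifted_delannoy_term_pair dvdn_mulr.
by rewrite coprimeXl // coprimeXr // coprime_sym.
Qed.

Lemma sum_ord_double (V : nmodType) (F : nat -> V) (h : nat) :
  \sum_(j < h.*2) F j = \sum_(i < h) (F i.*2 + F i.*2.+1).
Proof.
elim: h => [|h IHh]; first by rewrite !big_ord0.
by rewrite doubleS !big_ord_recr /= IHh addrA.
Qed.

Lemma alt_cube_delannoy_sum_even (m h : nat) : m.+1 = h.*2 ->
  \sum_(0 <= k < m.+1) (-1) ^+ k * ((2 * k + 1)%N)%:Z ^+ 3 * (delannoy k)%:Z
    - 2 * (m.+1)%:Z ^+ 2
  = (m.+1)%:Z * (\sum_(i < h) (8 * i + 5)%N%:Z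
         * (shifted_delannoy_term m i.*2 + shifted_delannoy_term m i.*2.+1)%N%:Z
       - 4 * (m.+1)%:Z ^+ 2 * \sum_(j < m.+1) (shifted_delannoy_term m j)%:Z).
Proof.
move=> Em; set f := shifted_delannoy_term m.
have sign_m : (-1) ^+ m = -1 :> int.
  by rewrite -signr_odd; move: (odd_double h); rewrite -Em /= => /negbFE->.
have pairsE : \sum_(i < h) (8 * i + 5)%N%:Z * (f i.*2 + f i.*2.+1)%N%:Z
    = \sum_(j < m.+1) (f j)%:Z * (4 * j%:Z + 3)
      + 2 * \sum_(j < m.+1) (-1) ^+ j * (f j)%:Z.
  rewrite big_distrr -big_split /= Em (@sum_ord_double _
    (fun j => (f j)%:Z * (4 * j%:Z + 3) + 2 * ((-1) ^+ j * (f j)%:Z))).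
  apply: eq_bigr => i _.
  by rewrite PoszD exprS -signr_odd odd_double expr0 -!mul2n; ring.
have distrE : \sum_(j < m.+1) (f j)%:Z * (4 * (m.+1)%:Z ^+ 2 - 4 * j%:Z - 3)
    = 4 * (m.+1)%:Z ^+ 2 * \sum_(j < m.+1) (f j)%:Z
      - \sum_(j < m.+1) (f j)%:Z * (4 * j%:Z + 3).
  by rewrite big_distrr -sumrB; apply: eq_bigr => j _; ring.
rewrite alt_cube_delannoy_sumE distrE pairsE alt_shifted_delannoy_sum sign_m.
by ring.
Qed.

Theorem mainTheorem4 (a : nat) (n : nat) :
  (1 <= a)%N -> n = (2 ^ a)%N ->
  (\sum_(0 <= k < n) (-1) ^+ k * ((2 * k + 1)%N)%:Z ^+ 3 * (delannoy k)%:Z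
     = 2 * (n%:Z) ^+ 2 %[mod (n%:Z) ^+ 3])%Z.
Proof.
case: a => [//|b] _ ->.
have [m Em] : exists m, (2 ^ b.+1 = m.+1)%N.
  by exists (2 ^ b.+1).-1; rewrite prednK ?expn_gt0.
have Eh : (m.+1 = (2 ^ b).*2)%N by rewrite -Em expnS mul2n.
apply/eqP; rewrite Em eqz_mod_dvd (alt_cube_delannoy_sum_even _ _ Eh) exprS.
apply: dvdz_mul; first exact: dvdzz.
apply: rpredB; last exact/dvdz_mulr/dvdz_mull/dvdzz.
apply: rpred_sum => i _; apply: dvdz_mull.
apply: dvdn_shifted_delannoy_term_pair.
by rewrite -Em coprimeXr // coprimen2 /= odd_double.
Qed.
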